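(* Let $n\ge 1$ and let $L\subseteq\Sigma^*$ be a finite or cofinite regular language with state complexity $n$. Then the syntactic complexity of $L$ satisfies $\sigma(L)\le (n-1)!$. Moreover, this bound is tight: for every $n\ge 1$ there exist an alphabet $\Sigma$ and a finite language $L\subseteq\Sigma^*$ with state complexity $n$ and $\sigma(L)=(n-1)!$.
   Context: A language $L\subseteq\Sigma^*$ over a finite non-empty alphabet $\Sigma$ is cofinite if its complement $\Sigma^*\setminus L$ is finite. The state complexity of a regular language $L$ is the number of states of its minimal deterministic finite automaton (DFA). The syntactic (Myhill) congruence of $L$ is defined on $\Sigma^*$ by $x\approx_L y$ iff for all $u,v\in\Sigma^*$, $uxv\in L \Leftrightarrow uyv\in L$. The syntactic semigroup of $L$ is $\Sigma^+/\approx_L$. The syntactic complexity $\sigma(L)$ is the cardinality of the syntactic semigroup of $L$; equivalently, it is the number of distinct transformations of the state set of the minimal DFA of $L$ induced by non-empty words. *)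

From mathcomp Require Import all_boot.
Set Implicit Arguments. Unset Strict Implicit. Unset Printing Implicit Defensive.

Definition lang (Sigma : finType) := pred (seq Sigma).

Definition finite_lang (Sigma : finType) (L : lang Sigma) : Prop :=
  exists s : seq (seq Sigma), forall w, L w -> w \in s.

Definition cofinite_lang (Sigma : finType) (L : lang Sigma) : Prop :=
  exists s : seq (seq Sigma), forall w, ~~ L w -> w \in s.

Record DFA (Sigma : finType) := {
  dfa_state : finType;
  dfa_init : dfa_state;
  dfa_trans : dfa_state -> Sigma -> dfa_state;
  dfa_final : pred dfa_state }.

Definition dfa_accepts (Sigma : finType) (A : DFA Sigma) (w : seq Sigma) : bool :=
  @dfa_final Sigma A (foldl (@dfa_trans Sigma A) (@dfa_init Sigma A) w).

Definition state_complexity (Sigma : finType) (L : lang Sigma) (n : nat) : Prop :=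
  (exists A : DFA Sigma, dfa_accepts A =1 L /\ #|@dfa_state Sigma A| = n) /\
  (forall A : DFA Sigma, dfa_accepts A =1 L -> n <= #|@dfa_state Sigma A|).

Definition syn_equiv (Sigma : finType) (L : lang Sigma) (x y : seq Sigma) : Prop :=
  forall u v : seq Sigma, L (u ++ x ++ v) = L (u ++ y ++ v).

(* [syntactic_complexity L k]: the syntactic semigroup Sigma^+ / ~L has exactly
   k elements, i.e. there are k non-empty words, pairwise non-congruent, such
   that every non-empty word is congruent to one of them. *)
Definition syntactic_complexity (Sigma : finType) (L : lang Sigma) (k : nat) : Prop :=
  exists reps : seq (seq Sigma),
    [/\ size reps = k,
        forall x, x \in reps -> x != [::],
        forall i j, i < k -> j < k -> syn_equiv L (nth [::] reps i) (nth [::] reps j) -> i = j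
      & forall w, w != [::] -> exists2 x, x \in reps & syn_equiv L w x].

From mathcomp Require Import all_boot.
From mathcomp Require Import boolp.
Set Implicit Arguments. Unset Strict Implicit. Unset Printing Implicit Defensive.

(* The syntactic semigroup of L is the transition semigroup of its minimal
   DFA, i.e. the set of state transformations induced by non-empty words.
   When L is finite, every state q of the minimal DFA has a height: one more
   than the length of the longest word accepted from q, and 0 for the unique
   dead state.  A non-empty word fixes the dead state and strictly lowers the
   height of every live state, so a live state can only be sent to the dead
   state or to a live state of smaller height.  Listing the at most n - 1 live
   states by increasing height, the i-th one has at most i possible images,
   which gives at most (n - 1)! transformations; complementing the final
   states handles cofinite languages.  Conversely, on the states 0, ..., n - 1
   with sink n - 1 and final state n - 2, let each transformation t be a
   letter sending q to t q if q < t q and to the sink otherwise: the words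
   then induce exactly the (n - 1)! transformations that fix the sink and
   strictly increase every other state. *)

Lemma card_family_prod (aT rT : finType) (F : aT -> {set rT}) :
  #|family F| = \prod_(x : aT) #|F x|.
Proof. by rewrite card_family foldrE big_map big_enum. Qed.

Lemma prod_card_lt_rank_leq_fact (T : finType) (h : T -> nat) (X : {set T}) :
  \prod_(q in X) #|[set r in X | h r < h q]|.+1 <= #|X|`!.
Proof.
move Xm : #|X| => m; elim: m X Xm => [|m IHm] X Xm.
  by move/eqP: Xm; rewrite cards_eq0 => /eqP ->; rewrite big_set0.
have [q0 Xq0] : exists q0, q0 \in X by apply/set0Pn; rewrite -card_gt0 Xm.
have [q1 Xq1 q1_max] := @arg_maxnP _ q0 (fun q => q \in X) h Xq0.
have X'm : #|X :\ q1| = m by move: (cardsD1 q1 X); rewrite Xq1 Xm add1n => -[].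
rewrite (bigD1 q1 Xq1) factS leq_mul //.
  rewrite ltnS -X'm; apply/subset_leq_card/subsetP => r.
  by rewrite !inE => /andP[-> lt_r]; rewrite andbT; apply: contraTneq lt_r => ->; rewrite ltnn.
apply: leq_trans (IHm _ X'm).
rewrite (eq_bigl (mem (X :\ q1))) => [|q]; last by rewrite !inE andbC.
apply: leq_prod => q; rewrite !inE => /andP[_ Xq]; rewrite ltnS.
apply/subset_leq_card/subsetP => r; rewrite !inE => /andP[Xr lt_r].
rewrite Xr lt_r !andbT; apply: contraTneq lt_r => ->.
by rewrite -leqNgt; apply: q1_max.
Qed.

Lemma card_ord_gt k (q : nat) : #|[set r : 'I_k | q < r]| = k - q.+1.
Proof.
rewrite -[RHS]muln1 -sum_nat_const_nat big_geq_mkord -sum1_card.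
by apply: eq_bigl => r; rewrite inE.
Qed.

Section Words.
Variable Sigma : finType.

Fixpoint words_upto (k : nat) : seq (seq Sigma) :=
  if k is k'.+1 then [::] :: [seq c :: w | c <- enum Sigma, w <- words_upto k']
  else [:: [::]].

Lemma mem_words_upto k (w : seq Sigma) : size w <= k -> w \in words_upto k.
Proof.
elim: k w => [|k IHk] [|c w] //= w_le; rewrite in_cons /=.
by apply/allpairsP; exists (c, w); rewrite mem_enum IHk.
Qed.

Lemma finite_langP (L : lang Sigma) :
  finite_lang L <-> exists N, forall w, L w -> size w <= N.
Proof.
split=> [[s Ls] | [N L_le]].
  by exists (\max_(v <- s) size v) => w /Ls w_s; apply: leq_bigmax_seq.
by exists (words_upto N) => w /L_le; apply: mem_words_upto.
Qed.

Definition image_nonempty (T : finType) (phi : seq Sigma -> T) : {set T} :=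
  [set f | `[< exists2 x, x != [::] & phi x = f >]].

Lemma image_nonemptyP (T : finType) (phi : seq Sigma -> T) f :
  reflect (exists2 x, x != [::] & phi x = f) (f \in image_nonempty phi).
Proof. by rewrite inE; apply: asboolP. Qed.

Lemma syntactic_complexity_image (L : lang Sigma) (T : finType)
    (phi : seq Sigma -> T) :
  (forall x y, syn_equiv L x y <-> phi x = phi y) ->
  syntactic_complexity L #|image_nonempty phi|.
Proof.
move=> phiP; set S := image_nonempty phi.
have [rep repP] : {rep : T -> seq Sigma &
    forall f, f \in S -> rep f != [::] /\ phi (rep f) = f}.
  apply: (@choice _ _ (fun f x => f \in S -> x != [::] /\ phi x = f)) => f.
  have [/image_nonemptyP[x x0 <-]|_] := boolP (f \in S).
    by exists x.
  by exists [::].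
exists [seq rep f | f <- enum S]; split.
- by rewrite size_map cardE.
- by move=> x /mapP[f]; rewrite mem_enum => /repP[x0 _] ->.
- move=> i j; rewrite cardE => lt_i lt_j.
  have inS k : k < size (enum S) -> nth (phi [::]) (enum S) k \in S.
    by move=> lt_k; rewrite -mem_enum mem_nth.
  rewrite !(nth_map (phi [::])) // => /phiP.
  rewrite (proj2 (repP _ (inS _ lt_i))) (proj2 (repP _ (inS _ lt_j))) => eq_ij.
  by apply/eqP; rewrite -(nth_uniq (phi [::]) lt_i lt_j (enum_uniq _)) eq_ij.
- move=> w w0; have Sw : phi w \in S by apply/image_nonemptyP; exists w.
  exists (rep (phi w)); first by apply: map_f; rewrite mem_enum.
  by apply/phiP; rewrite (proj2 (repP _ Sw)).
Qed.

Lemma syntactic_complexity_compl (L : lang Sigma) k :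
  syntactic_complexity (predC L) k -> syntactic_complexity L k.
Proof.
have synC x y : syn_equiv (predC L) x y <-> syn_equiv L x y.
  by split=> eq_xy u v; [apply: negb_inj; apply: eq_xy | rewrite /= eq_xy].
case=> reps [reps_k reps0 reps_inj reps_cover]; exists reps; split => //.
- by move=> i j lt_i lt_j /synC; apply: reps_inj.
- by move=> w /reps_cover[x reps_x /synC]; exists x.
Qed.

End Words.

Section DFATheory.
Variables (Sigma : finType) (A : DFA Sigma).
Local Notation Q := (dfa_state A).

Definition dfa_run (q : Q) (w : seq Sigma) : Q := foldl (@dfa_trans Sigma A) q w.

Definition dfa_lang (q : Q) : lang Sigma := fun w => dfa_final (dfa_run q w).

Definition dfa_action (x : seq Sigma) : {ffun Q -> Q} := [ffun q => dfa_run q x].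

Definition transition_semigroup : {set {ffun Q -> Q}} := image_nonempty dfa_action.

Definition accessible (q : Q) : bool :=
  `[< exists u, dfa_run (dfa_init A) u = q >].

Definition dfa_accessible := forall q : Q, accessible q.

Definition dfa_reduced := forall p q : Q, dfa_lang p =1 dfa_lang q -> p = q.

Definition dfa_compl : DFA Sigma :=
  {| dfa_state := Q; dfa_init := dfa_init A; dfa_trans := @dfa_trans Sigma A;
     dfa_final := predC (@dfa_final Sigma A) |}.

Lemma dfa_acceptsE w : dfa_accepts A w = dfa_lang (dfa_init A) w.
Proof. by []. Qed.

Lemma dfa_run_cat q x y : dfa_run q (x ++ y) = dfa_run (dfa_run q x) y.
Proof. exact: foldl_cat. Qed.

Lemma dfa_lang_run q x w : dfa_lang (dfa_run q x) w = dfa_lang q (x ++ w).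
Proof. by rewrite /dfa_lang dfa_run_cat. Qed.

Lemma accessible_init : accessible (dfa_init A).
Proof. by apply/asboolP; exists [::]. Qed.

Lemma accessible_run q x : accessible q -> accessible (dfa_run q x).
Proof. by move/asboolP=> [u <-]; apply/asboolP; exists (u ++ x); rewrite dfa_run_cat. Qed.

Lemma dfa_compl_accepts (L : lang Sigma) :
  dfa_accepts A =1 L -> dfa_accepts dfa_compl =1 predC L.
Proof. by move=> AL w; rewrite /= -AL. Qed.

End DFATheory.

Section AccessibleReduced.
Variables (Sigma : finType) (A : DFA Sigma).
Hypotheses (A_acc : dfa_accessible A) (A_red : dfa_reduced A).
Local Notation Q := (dfa_state A).

Lemma syn_equiv_action x y :
  syn_equiv (dfa_accepts A) x y <-> dfa_action A x = dfa_action A y.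
Proof.
split=> [eq_xy | eq_xy u v]; last first.
  rewrite !dfa_acceptsE -!dfa_lang_run; congr (dfa_lang _ v).
  by have /ffunP/(_ (dfa_run (dfa_init A) u)) := eq_xy; rewrite !ffunE.
apply/ffunP => q; rewrite !ffunE; apply: A_red => v.
have /asboolP[u <-] := A_acc q.
by rewrite !dfa_lang_run -!dfa_acceptsE; apply: eq_xy.
Qed.

Lemma syntactic_complexity_transition_semigroup (L : lang Sigma) :
  dfa_accepts A =1 L -> syntactic_complexity L #|transition_semigroup A|.
Proof.
move=> AL; apply: syntactic_complexity_image => x y; rewrite -syn_equiv_action.
by split=> eq_xy u v; have := eq_xy u v; rewrite !AL.
Qed.

Lemma card_le_dfa (B : DFA Sigma) :
  dfa_accepts B =1 dfa_accepts A -> #|Q| <= #|dfa_state B|.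
Proof.
move=> BA; have [word wordP] : {word : Q -> seq Sigma &
    forall q, dfa_run (dfa_init A) (word q) = q}.
  by apply: (@choice _ _ (fun q w => dfa_run (dfa_init A) w = q)) => q; apply/asboolP/A_acc.
pose g q := dfa_run (dfa_init B) (word q).
suff g_inj : injective g by exact: leq_card g_inj.
move=> p q eq_g; apply: A_red => v.
rewrite -(wordP p) -(wordP q) !dfa_lang_run -!dfa_acceptsE -!BA !dfa_acceptsE.
by rewrite -!dfa_lang_run -/(g p) -/(g q) eq_g.
Qed.

End AccessibleReduced.

Section Reduction.
Variables (Sigma : finType) (A : DFA Sigma).
Local Notation Q := (dfa_state A).

Definition canon (q : Q) : Q :=
  odflt q [pick r | accessible r & `[< dfa_lang q =1 dfa_lang r >]].

Definition canonical (q : Q) : bool := accessible q && (canon q == q).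

Lemma canonP q :
  accessible q -> accessible (canon q) /\ dfa_lang (canon q) =1 dfa_lang q.
Proof.
move=> q_acc; rewrite /canon; case: pickP => [r /andP[r_acc /asboolP eq_qr] | /(_ q)].
  by split=> // w; rewrite eq_qr.
by rewrite q_acc asboolT.
Qed.

Lemma canon_eq p q : accessible p -> dfa_lang p =1 dfa_lang q -> canon p = canon q.
Proof.
move=> p_acc eq_pq.
have eq_lang (r : Q) : dfa_lang p =1 dfa_lang r <-> dfa_lang q =1 dfa_lang r.
  by split=> e w; rewrite -e eq_pq.
rewrite /canon (@eq_pick _ _ [pred r | accessible r & `[< dfa_lang q =1 dfa_lang r >]]).
  by case: pickP => //= /(_ p); rewrite /= p_acc asboolT.
move=> r /=; congr (_ && _).
by apply/asboolP/asboolP => /eq_lang.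
Qed.

Lemma canonical_accessible q : canonical q -> accessible q.
Proof. by case/andP. Qed.

Lemma canonical_canon q : accessible q -> canonical (canon q).
Proof.
move=> q_acc; have [c_acc c_lang] := canonP q_acc.
by rewrite /canonical c_acc (canon_eq c_acc c_lang) eqxx.
Qed.

Lemma canon_run q w :
  accessible q -> canon (dfa_run (canon q) w) = canon (dfa_run q w).
Proof.
move=> q_acc; have [c_acc c_lang] := canonP q_acc.
by apply: canon_eq => [|v]; rewrite ?accessible_run // !dfa_lang_run c_lang.
Qed.

(* One state per Nerode class of accessible states of A. *)
Definition dfa_reduce : DFA Sigma :=
  {| dfa_state := {q : Q | canonical q};
     dfa_init := exist (fun q => canonical q) _ (canonical_canon (accessible_init A));
     dfa_trans := fun p c => exist (fun q => canonical q) _ (canonical_canon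
       (accessible_run [:: c] (canonical_accessible (valP p))));
     dfa_final := fun p => dfa_final (val p) |}.

Lemma val_run_reduce (p : dfa_state dfa_reduce) w :
  val (dfa_run p w) = canon (dfa_run (val p) w).
Proof.
elim: w p => [|c w IHw] p /=; first by case/andP: (valP p) => _ /eqP.
by rewrite IHw canon_run //; apply: (accessible_run [:: c]) (canonical_accessible (valP p)).
Qed.

Lemma dfa_lang_reduce (p : dfa_state dfa_reduce) : dfa_lang p =1 dfa_lang (val p).
Proof.
move=> w; rewrite /dfa_lang /= val_run_reduce.
by have [_ /(_ [::])] := canonP (accessible_run w (canonical_accessible (valP p))).
Qed.

Lemma dfa_reduce_accepts : dfa_accepts dfa_reduce =1 dfa_accepts A.
Proof.
move=> w; rewrite [LHS]dfa_lang_reduce /=.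
by have [_ ->] := canonP (accessible_init A).
Qed.

Lemma dfa_reduce_accessible : dfa_accessible dfa_reduce.
Proof.
move=> p; have /asboolP[u u_p] := canonical_accessible (valP p).
apply/asboolP; exists u; apply: val_inj.
rewrite val_run_reduce canon_run ?accessible_init // u_p.
by case/andP: (valP p) => _ /eqP.
Qed.

Lemma dfa_reduce_reduced : dfa_reduced dfa_reduce.
Proof.
move=> p q eq_pq; apply: val_inj.
case/andP: (valP p) => p_acc /eqP <-; case/andP: (valP q) => _ /eqP <-.
by apply: canon_eq => // w; rewrite -!dfa_lang_reduce.
Qed.

Lemma card_reduce : #|dfa_state dfa_reduce| <= #|Q|.
Proof. exact: leq_card val_inj. Qed.

End Reduction.

Section FiniteLanguage.
Variables (Sigma : finType) (A : DFA Sigma) (N : nat).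
Hypotheses (A_acc : dfa_accessible A) (A_red : dfa_reduced A).
Hypothesis A_bounded : forall w, dfa_accepts A w -> size w <= N.
Local Notation Q := (dfa_state A).

Lemma dfa_lang_bounded (q : Q) w : dfa_lang q w -> size w <= N.
Proof.
have /asboolP[u <-] := A_acc q; rewrite dfa_lang_run => /A_bounded.
by rewrite size_cat; apply: leq_trans; apply: leq_addl.
Qed.

(* Words longer than N are never accepted from an accessible state, so the
   maximum may range over [words_upto N]. *)
Definition height (q : Q) : nat :=
  \max_(w <- words_upto Sigma N | dfa_lang q w) (size w).+1.

Lemma height_ge (q : Q) w : dfa_lang q w -> (size w).+1 <= height q.
Proof.
move=> qw; apply: leq_bigmax_seq => //.
exact/mem_words_upto/(dfa_lang_bounded qw).
Qed.

Lemma height_eq0 q : height q = 0 <-> forall w, ~~ dfa_lang q w.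
Proof.
split=> [q0 w | dead]; first by apply/negP => /height_ge; rewrite q0.
by apply/eqP; rewrite -leqn0; apply/bigmax_leqP_seq => w _ qw; have := dead w; rewrite qw.
Qed.

Lemma dead_unique p q : height p = 0 -> height q = 0 -> p = q.
Proof.
move=> /height_eq0 p0 /height_eq0 q0; apply: A_red => w.
by rewrite (negbTE (p0 w)) (negbTE (q0 w)).
Qed.

Lemma dead_run (q : Q) x : height q = 0 -> dfa_run q x = q.
Proof.
move=> q0; have /height_eq0 q_dead := q0.
by apply: dead_unique q0; apply/height_eq0 => w; rewrite dfa_lang_run.
Qed.

Lemma height_run_lt (q : Q) x :
  x != [::] -> 0 < height q -> height (dfa_run q x) < height q.
Proof.
move=> x0 q_live; rewrite -(prednK q_live) ltnS.
apply/bigmax_leqP_seq => w _; rewrite dfa_lang_run => /height_ge.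
rewrite -(prednK q_live) ltnS size_cat; apply: leq_trans.
by rewrite -{1}[size w]add0n ltn_add2r lt0n size_eq0.
Qed.

Definition action_bound (q : Q) : {set Q} :=
  if height q == 0 then [set q] else [set r | height r < height q].

Definition live : {set Q} := [set q | 0 < height q].

Lemma dfa_action_bound x : x != [::] -> dfa_action A x \in family action_bound.
Proof.
move=> x0; apply/familyP => q; rewrite ffunE /action_bound.
have [q0|q_live] := posnP (height q); first by rewrite dead_run ?set11.
by rewrite inE height_run_lt.
Qed.

Lemma card_action_bound q :
  q \in live -> #|action_bound q| <= #|[set r in live | height r < height q]|.+1.
Proof.
rewrite inE /action_bound => q_live; rewrite gtn_eqF //.
apply: (@leq_trans #|[set r in live | height r < height q] :|: [set r | height r == 0]|).
  by apply/subset_leq_card/subsetP => r; rewrite !inE lt0n => ->; case: (height r == 0).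
rewrite -addn1; apply: leq_trans (leq_card_setU _ _) _; rewrite leq_add2l.
by apply/card_le1_eqP => p r; rewrite !inE => /eqP p0 /eqP r0; apply: dead_unique.
Qed.

Lemma card_live (a : Sigma) : #|live| <= #|Q|.-1.
Proof.
pose d := dfa_run (dfa_init A) (nseq N.+1 a).
have d0 : height d = 0.
  apply/height_eq0 => w; apply/negP; rewrite dfa_lang_run => /A_bounded.
  by rewrite size_cat size_nseq ltnNge leq_addr.
rewrite -(cardsC1 d); apply/subset_leq_card/subsetP => q.
by rewrite !inE; apply: contraTneq => ->; rewrite d0.
Qed.

Lemma card_transition_semigroup (a : Sigma) :
  #|transition_semigroup A| <= (#|Q|.-1)`!.
Proof.
apply: (@leq_trans #|family action_bound|).
  by apply/subset_leq_card/subsetP => f /image_nonemptyP[x x0 <-]; apply: dfa_action_bound.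
rewrite card_family_prod (bigID (mem live)) /= -[X in _ <= X]muln1 leq_mul //.
  apply: leq_trans (leq_fact (card_live a)).
  apply: leq_trans (prod_card_lt_rank_leq_fact height live).
  by apply: leq_prod => q; apply: card_action_bound.
rewrite big1 // => q; rewrite inE -leqNgt leqn0 /action_bound => /eqP ->.
exact: cards1.
Qed.

End FiniteLanguage.

Lemma syntactic_complexity_finite_le (Sigma : finType) (a : Sigma)
    (A : DFA Sigma) (L : lang Sigma) :
  dfa_accepts A =1 L -> finite_lang L ->
  exists k, syntactic_complexity L k /\ k <= (#|dfa_state A|.-1)`!.
Proof.
move=> AL /finite_langP[N L_le]; set D := dfa_reduce A.
have DL : dfa_accepts D =1 L by move=> w; rewrite dfa_reduce_accepts AL.
exists #|transition_semigroup D|; split.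
  apply: (syntactic_complexity_transition_semigroup _ _ DL).
  - exact: dfa_reduce_accessible.
  - exact: dfa_reduce_reduced.
have D_le : #|dfa_state D|.-1 <= #|dfa_state A|.-1.
  by rewrite -!subn1 leq_sub2r ?card_reduce.
apply: leq_trans (leq_fact D_le).
apply: card_transition_semigroup a.
- exact: dfa_reduce_accessible.
- exact: dfa_reduce_reduced.
- by move=> w; rewrite DL; apply: L_le.
Qed.

Section ChainDFA.
Variable m : nat.
Local Notation S := 'I_m.+1.
Local Notation Sg := {ffun S -> S}.

Definition chain_act (t : Sg) (q : S) : S := if q < t q then t q else ord_max.

(* The final state is m - 1; when m = 0 there is none. *)
Definition chain_dfa : DFA Sg :=
  {| dfa_state := S; dfa_init := ord0; dfa_trans := fun q t => chain_act t q;
     dfa_final := fun q : S => q.+1 == m |}.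

Local Notation run := (@dfa_run _ chain_dfa).

Lemma chain_act_max t : chain_act t ord_max = ord_max.
Proof. by rewrite /chain_act ltnNge -ltnS ltn_ord. Qed.

Lemma chain_act_gt t (q : S) : q != ord_max -> q < chain_act t q.
Proof.
move=> q_max; rewrite /chain_act; case: ifP => // _.
by rewrite ltn_neqAle leq_ord andbT; apply: contra q_max => /eqP/val_inj ->.
Qed.

Lemma chain_run_max w : run ord_max w = ord_max.
Proof. by elim: w => //= t w; rewrite chain_act_max. Qed.

Lemma chain_run_size (q : S) w : run q w != ord_max -> q + size w <= run q w.
Proof.
elim: w q => [|t w IHw] q /=; first by rewrite addn0.
move=> run_max; have q_max : q != ord_max.
  by apply: contraNneq run_max => ->; rewrite chain_act_max chain_run_max.
by rewrite addnS; apply: leq_trans (IHw _ run_max); rewrite ltn_add2r chain_act_gt.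
Qed.

Lemma chain_accepts_size w : dfa_accepts chain_dfa w -> size w <= m.
Proof.
rewrite dfa_acceptsE /dfa_lang /= => run_m.
have run_max : run ord0 w != ord_max.
  by apply/eqP => /(congr1 val) /= run_eq; rewrite run_eq eqn_leq ltnn in run_m.
have := chain_run_size run_max; rewrite add0n => /leq_trans; apply.
by rewrite -ltnS (eqP run_m).
Qed.

Lemma chain_finite : finite_lang (dfa_accepts chain_dfa).
Proof. by apply/finite_langP; exists m; apply: chain_accepts_size. Qed.

Lemma chain_accessible : dfa_accessible chain_dfa.
Proof.
move=> q; apply/asboolP; have [->|q0] := eqVneq q ord0; first by exists [::].
by exists [:: [ffun _ => q]]; rewrite /= /chain_act ffunE lt0n ifT.
Qed.

Lemma chain_distinguish (p q : dfa_state chain_dfa) :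
  p < q -> exists v, dfa_lang p v != dfa_lang q v.
Proof.
move=> lt_pq; have [p_fin|p_fin] := eqVneq p.+1 m.
  have m_lt : m < q.+1 by move: lt_pq; rewrite -ltnS p_fin.
  by exists [::]; rewrite /dfa_lang /= p_fin eqxx gtn_eqF.
pose t : Sg := [ffun r => if r == p then inord m.-1 else ord_max].
have p_lt : p < m.-1.
  by rewrite ltn_predRL ltn_neqAle p_fin (leq_trans lt_pq (leq_ord q)).
have t_p : chain_act t p = inord m.-1.
  by rewrite /chain_act ffunE eqxx inordK ?p_lt // ltnS leq_pred.
have t_q : chain_act t q = ord_max.
  have tq : t q = ord_max by rewrite ffunE ifF //; exact: gtn_eqF lt_pq.
  by rewrite /chain_act tq; case: ifP.
exists [:: t]; rewrite /dfa_lang /= t_p t_q inordK ?ltnS ?leq_pred //.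
rewrite prednK ?eqxx ?gtn_eqF //.
exact: leq_ltn_trans (leq0n p) (leq_trans p_lt (leq_pred m)).
Qed.

Lemma chain_reduced : dfa_reduced chain_dfa.
Proof.
move=> p q eq_pq; case: (ltngtP p q) => [lt_pq|lt_qp|/val_inj //].
  by have [v] := chain_distinguish lt_pq; rewrite eq_pq eqxx.
by have [v] := chain_distinguish lt_qp; rewrite eq_pq eqxx.
Qed.

Lemma chain_state_complexity : state_complexity (dfa_accepts chain_dfa) m.+1.
Proof.
split; first by exists chain_dfa; rewrite card_ord.
by move=> B /(card_le_dfa chain_accessible chain_reduced); rewrite card_ord.
Qed.

Definition chain_bound (q : S) : {set S} :=
  if q == ord_max then [set ord_max] else [set r : S | q < r].

Lemma chain_act_bound t q : t \in family chain_bound -> chain_act t q = t q.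
Proof.
move/familyP/(_ q); rewrite /chain_bound /chain_act; case: eqP => [->|_].
  by rewrite inE => /eqP ->; rewrite ltnn.
by rewrite inE => ->.
Qed.

Lemma chain_transition_semigroup :
  transition_semigroup chain_dfa = [set t in family chain_bound].
Proof.
apply/setP => t; rewrite [RHS]inE; apply/image_nonemptyP/idP => [[x x0 <-] | t_bound].
  apply/familyP => q; rewrite ffunE /chain_bound; case: eqP => [->|/eqP q_max].
    by rewrite chain_run_max set11.
  rewrite inE; have [->|run_max] := eqVneq (run q x) ord_max.
    by rewrite ltn_neqAle q_max leq_ord.
  by apply: leq_trans (chain_run_size run_max); rewrite -addn1 leq_add2l lt0n size_eq0.
by exists [:: t] => //; apply/ffunP => q; rewrite ffunE /= chain_act_bound.
Qed.

Lemma chain_syntactic_complexity : syntactic_complexity (dfa_accepts chain_dfa) m`!.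
Proof.
have := syntactic_complexity_transition_semigroup chain_accessible chain_reduced (frefl _).
rewrite chain_transition_semigroup cardsE card_family_prod big_ord_recr /=.
rewrite /chain_bound eqxx cards1 muln1 -ffactnn ffact_prod.
congr (syntactic_complexity _ _); apply: eq_bigr => i _.
rewrite ifF ?card_ord_gt ?subSS //.
by apply/negbTE; rewrite -val_eqE /= neq_ltn ltn_ord.
Qed.

End ChainDFA.

Theorem theorem1 :
  (forall (Sigma : finType) (L : lang Sigma) (n : nat),
      0 < #|Sigma| -> 1 <= n ->
      (finite_lang L \/ cofinite_lang L) ->
      state_complexity L n ->
      exists k, syntactic_complexity L k /\ k <= (n.-1)`!) /\
  (forall n : nat, 1 <= n ->
      exists Sigma : finType, 0 < #|Sigma| /\
        exists L : lang Sigma,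
          [/\ finite_lang L, state_complexity L n & syntactic_complexity L (n.-1)`!]).
Proof.
split.
  move=> Sigma L n /card_gt0P[a _] _ L_fin [[A [AL <-]] _].
  case: L_fin => [L_fin|L_cofin]; first exact: syntactic_complexity_finite_le AL L_fin.
  have [k [Lc_k k_le]] := syntactic_complexity_finite_le a (dfa_compl_accepts AL) L_cofin.
  by exists k; split; first exact: syntactic_complexity_compl.
case=> // m _; exists {ffun 'I_m.+1 -> 'I_m.+1}; split.
  by apply/card_gt0P; exists [ffun q => q].
exists (dfa_accepts (chain_dfa m)); split.
- exact: chain_finite.
- exact: chain_state_complexity.
- exact: chain_syntactic_complexity.
Qed.
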